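(* Let $\Gamma_M$ ($M>0$) be a family of nonatomic routing games with a single OD pair with demand $M$, sharing the same graph, path set and edge costs $(c_e)_{e\in\mathcal E}$. Suppose that for every edge $e$ there is $q_e\ge 0$ such that $\lim_{x\to \infty}c_e(x)/x^{q_e}$ is finite and nonzero. Then $\mathrm{PoA}(\Gamma_M)\to 1$ as $M\to \infty$.
   Context: A nonatomic routing game with a single OD pair consists of a finite directed multigraph with edge set $\mathcal E$, a nonempty finite set $\mathcal P$ of paths from an origin to a destination, a demand $M>0$, and continuous nondecreasing edge costs $c_e:[0,\infty)\to[0,\infty)$. Feasible flows: $f\in\mathbb R_+^{\mathcal P}$ with $\sum_p f_p=M$; loads $x_e=\sum_{p\ni e}f_p$; path costs $c_p(f)=\sum_{e\in p}c_e(x_e)$. A Wardrop equilibrium is a feasible $f^*$ with $c_p(f^* )\le c_{p'}(f^* )$ whenever $f^*_p>0$. Social cost $L(x)=\sum_e x_ec_e(x_e)$; $\mathrm{Opt}$ is its minimum over feasible loads, $\mathrm{Eq}=L(x^* )$ at an equilibrium load, and $\mathrm{PoA}=\mathrm{Eq}/\mathrm{Opt}$; it is assumed that $\mathrm{Opt}>0$ (otherwise $\mathrm{PoA}:=1$). *)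

From HB Require Import structures.
From mathcomp Require Import all_boot all_order all_algebra.
From mathcomp Require Import all_classical all_reals all_analysis.
Set Implicit Arguments. Unset Strict Implicit. Unset Printing Implicit Defensive.
Import Order.TTheory GRing.Theory Num.Theory.
Import numFieldNormedType.Exports.
Local Open Scope ring_scope.

Section Routing.
Variables (R : realType) (V E P : finType).
Variables (tl hd : E -> V) (o d : V).

Definition is_od_path (s : seq E) : bool :=
  if s is e :: s' then
    [&& tl e == o, path (fun e1 e2 => hd e1 == tl e2) e s',
        hd (last e s') == d & uniq (o :: map hd s)]
  else false.

Variables (pth : P -> seq E) (c : E -> R -> R).

Definition feasible (M : R) (f : P -> R) : Prop :=
  (forall p, 0 <= f p) /\ \sum_(p : P) f p = M.

Definition load (f : P -> R) (e : E) : R := \sum_(p : P | e \in pth p) f p.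

Definition path_cost (f : P -> R) (p : P) : R :=
  \sum_(e <- pth p) c e (load f e).

Definition wardrop_eq (M : R) (f : P -> R) : Prop :=
  feasible M f /\ forall p p', 0 < f p -> path_cost f p <= path_cost f p'.

Definition social_cost (f : P -> R) : R :=
  \sum_(e : E) load f e * c e (load f e).

End Routing.

From HB Require Import structures.
From mathcomp Require Import all_boot all_order all_algebra.
From mathcomp Require Import all_classical all_reals all_analysis.
From mathcomp Require Import ring lra.
Import Order.TTheory GRing.Theory Num.Theory.
Import numFieldNormedType.Exports.
Local Open Scope ring_scope.
Local Open Scope classical_set_scope.

(* Let D be the least, over all paths, of the largest growth exponent q_e
   along the path.  Summing over edges the pointwise inequality
     z c(z) + (D+1) c(z) (y - z) <= (1 + delta) y c(y) + delta M^(D+1),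
   valid for large M at the equilibrium load z and any load y, and using the
   variational inequality sum_e c_e(z_e) (y_e - z_e) >= 0, gives
   Eq <= (1 + delta) Opt + |E| delta M^(D+1).  Some path carries M/|P| of any
   flow and contains an edge with q_e >= D, so Opt is at least of order
   M^(D+1), and PoA <= 1 + O(delta).  The pointwise inequality is Young's
   inequality for the monomial a x^D when q_e = D; when q_e < D the edge costs
   o(M^D); when q_e > D the equilibrium load is o(M), because every used edge
   costs at most the equilibrium cost, which is O(M^D) along the optimal
   path. *)

Section PowerGrowth.
Context {R : realType}.

Lemma pinfty_threshold {P : R -> Prop} :
  (\forall x \near +oo, P x) -> exists2 Y, 0 < Y & forall x, Y <= x -> P x.
Proof.
case=> M [_ HM]; exists (Num.max 1 (M + 1)) => [|x]; first by rewrite lt_max ltr01.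
by rewrite ge_max => /andP[_ Mx]; apply: HM; rewrite (lt_le_trans _ Mx) // ltrDl.
Qed.

Lemma powR_ge1 (x r : R) : 1 <= x -> 0 <= r -> 1 <= x `^ r.
Proof. by move=> x1 r0; rewrite -(powRr0 x) ler_powR. Qed.

Lemma powR_dominated {r s : R} (k : R) : r < s ->
  \forall M \near +oo, k * M `^ r <= M `^ s.
Proof.
move=> rs; have sr : 0 < s - r by rewrite subr_gt0.
near=> M; have M0 : 0 < M by near: M; apply: nbhs_pinfty_gt.
rewrite -[in leRHS](subrK r s) powRD ?(gt_eqF M0) ?implybT //.
rewrite ler_pM2r ?powR_gt0 // (le_trans (ler_norm k)) //.
have kM : `|k| `^ (s - r)^-1 <= M by near: M; apply: nbhs_pinfty_ge; apply: num_real.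
rewrite -[leLHS]powRr1 // -[1](@mulVf _ (s - r)) ?gt_eqF // powRrM.
by apply: ge0_ler_powR; rewrite ?nnegrE ?powR_ge0 ?(ltW sr) ?(ltW M0).
Unshelve. all: by end_near. Qed.

(* Young's inequality (D+1) x^D y <= D x^(D+1) + y^(D+1), i.e. convexity of
   x^(D+1) at its tangent in x. *)
Lemma powR_tangent {D x y : R} : 0 <= D -> 0 <= x -> 0 <= y ->
  x * x `^ D + (D + 1) * (x `^ D * (y - x)) <= y * y `^ D.
Proof.
move=> D0 x0 y0; have [->|D_neq0] := eqVneq D 0.
  by rewrite !powRr0 !mulr1 add0r mul1r; lra.
have Dpos : 0 < D by rewrite lt0r D_neq0.
have D1 : 0 < D + 1 by rewrite ltr_wpDl.
have powRS t : 0 <= t -> t `^ (D + 1) = t * t `^ D.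
  by move=> t0; rewrite powRD ?powRr1 1?mulrC // gt_eqF.
have young := conjugate_powR (powR_ge0 x D) y0 (divr_gt0 D1 Dpos) D1.
rewrite -powRrM mulrCA divff // mulr1 !powRS // invf_div in young.
have {}young : x `^ D * y <= x * x `^ D * (D / (D + 1)) + y * y `^ D / (D + 1).
  by apply: young; field; rewrite lt0r_neq0.
have e : (D + 1) * (x * x `^ D * (D / (D + 1)) + y * y `^ D / (D + 1)) =
    D * (x * x `^ D) + y * y `^ D by field; rewrite lt0r_neq0.
by rewrite -(ler_pM2l D1) e in young; lra.
Qed.

End PowerGrowth.

Lemma ler_sum_term {R : realType} {I : finType} (F : I -> R) i :
  (forall j, 0 <= F j) -> F i <= \sum_j F j.
Proof. by move=> F0; rewrite (bigD1 i) //= lerDl sumr_ge0. Qed.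

Lemma exists_bottleneck {R : realType} {I T : finType} {s : I -> seq T}
    {w : T -> R} (i0 : I) :
  (forall i, s i != [::]) -> (forall t, 0 <= w t) ->
  exists D i1, [/\ 0 <= D, forall t, t \in s i1 -> w t <= D &
                forall i, exists2 t, t \in s i & D <= w t].
Proof.
move=> s_nil w_ge0; pose deg i := \big[Num.max/0]_(t | t \in s i) w t.
case: (arg_minP deg (isT : xpredT i0)) => i1 _ i1_min.
exists (deg i1), i1; split; first exact: bigmax_ge_id.
  by move=> t t_s; apply: le_bigmax_cond.
move=> i; have [t0 t0_s] : exists t, t \in s i.
  by case: (s i) (s_nil i) => // t ? _; exists t; rewrite mem_head.
have [t t_s deg_i] := eq_bigmax t0 _ w t0_s (fun t _ => w_ge0 t).
by exists t => //; rewrite -deg_i i1_min.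
Qed.

Lemma cost_limit_ge0 {R : realType} {c : R -> R} {q a : R} :
  (forall x, 0 <= x -> 0 <= c x) -> (c x / x `^ q) @[x --> +oo] --> a -> 0 <= a.
Proof.
move=> c_ge0 c_lim; rewrite leNgt; apply/negP => a_lt0.
have [x x0] := pinfty_ex_gt0 (cvgr_lt _ c_lim _ a_lt0).
by rewrite ltNge divr_ge0 ?powR_ge0 ?c_ge0 ?ltW.
Qed.

(* [z] stands for the equilibrium load of an edge and [y] for its load under a
   competing flow of demand [M]. *)
Definition edge_bound {R : realType} (c : R -> R) (D delta M z y : R) : Prop :=
  z * c z + (D + 1) * (c z * (y - z)) <=
    (1 + delta) * (y * c y) + delta * (M * M `^ D).

Section EdgeCost.
Context {R : realType} {c : R -> R} {q a : R}.
Hypotheses (c_ge0 : forall x, 0 <= x -> 0 <= c x)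
  (c_mono : forall x y, 0 <= x -> x <= y -> c x <= c y)
  (q_ge0 : 0 <= q) (a_gt0 : 0 < a)
  (c_lim : (c x / x `^ q) @[x --> +oo] --> a).

Lemma cost_close {d : R} : 0 < d ->
  \forall x \near +oo, `|c x - a * x `^ q| <= d * x `^ q.
Proof.
move=> d0; near=> x; have xq : 0 < x `^ q.
  by rewrite powR_gt0 //; near: x; apply: nbhs_pinfty_gt.
rewrite -[c x](divfK (lt0r_neq0 xq)) -mulrBl normrM (gtr0_norm xq) ler_pM2r //.
by near: x; apply: cvgr_distC_le.
Unshelve. all: by end_near. Qed.

Lemma cost_le_powR {D : R} : q <= D -> \forall M \near +oo, c M <= (a + 1) * M `^ D.
Proof.
move=> qD; near=> M; have M1 : 1 <= M by near: M; apply: nbhs_pinfty_ge.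
have /andP[_ cM] : a * M `^ q - 1 * M `^ q <= c M <= a * M `^ q + 1 * M `^ q.
  by rewrite -ler_distl; near: M; apply: cost_close.
rewrite (le_trans cM) // -mulrDl ler_wpM2l ?ler_powR // addr_ge0 // ltW.
Unshelve. all: by end_near. Qed.

Lemma cost_ge_powR : \forall x \near +oo, a / 2 * x `^ q <= c x.
Proof.
near=> x.
have /andP[cx _] : a * x `^ q - a / 2 * x `^ q <= c x <= a * x `^ q + a / 2 * x `^ q.
  by rewrite -ler_distl; near: x; apply: cost_close; rewrite divr_gt0.
by rewrite (le_trans _ cx) // -mulrBl ler_wpM2r ?powR_ge0 // lerBrDl -splitr.
Unshelve. all: by end_near. Qed.

Lemma cost_le_limit {x : R} : q = 0 -> 0 <= x -> c x <= a.
Proof.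
move=> q0 x0; rewrite leNgt; apply/negP => ax.
have [y xy] := pinfty_ex_ge (num_real x) (cvgr_lt _ c_lim _ ax).
by rewrite q0 powRr0 divr1 ltNge c_mono.
Qed.

Lemma cost_large (D k eta : R) : D < q -> 0 < eta ->
  \forall M \near +oo, k * M `^ D <= c (eta * M).
Proof.
move=> Dq eta0; have [Y _ HY] := pinfty_threshold cost_ge_powR.
have w0 : 0 < a / 2 * eta `^ q by rewrite mulr_gt0 ?divr_gt0 ?powR_gt0.
near=> M; have M0 : 0 < M by near: M; apply: nbhs_pinfty_gt.
apply: le_trans (HY (eta * M) _); last first.
  by rewrite -ler_pdivrMl //; near: M; apply: nbhs_pinfty_ge; apply: num_real.
rewrite powRM ?(ltW eta0) ?(ltW M0) // mulrA -[leLHS](mulVKf (lt0r_neq0 w0)).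
rewrite ler_pM2l // mulrA; near: M; exact: powR_dominated.
Unshelve. all: by end_near. Qed.

Lemma edge_bound_lt {D delta : R} : q < D -> 0 < delta ->
  \forall M \near +oo, forall z y, 0 <= z <= M -> 0 <= y <= M ->
    edge_bound c D delta M z y.
Proof.
move=> qD delta0; have D0 : 0 <= D := le_trans q_ge0 (ltW qD).
have D2 : 0 < D + 2 by rewrite ltr_wpDl.
near=> M => z y /andP[z0 zM] /andP[y0 yM]; have M0 := le_trans z0 zM.
have cM : c M <= delta / (D + 2) * M `^ D.
  apply: le_trans (_ : (a + 1) * M `^ q <= _); first by near: M; exact: cost_le_powR.
  rewrite -[leLHS](mulVKf (lt0r_neq0 (divr_gt0 delta0 D2))) ler_pM2l ?divr_gt0 //.
  by rewrite mulrA; near: M; exact: powR_dominated.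
have [cz0 czM] : 0 <= c z /\ c z <= c M by split; [exact: c_ge0 | exact: c_mono].
have zcz : z * c z <= M * c M by rewrite ler_pM.
have czy : c z * (y - z) <= c M * M.
  by rewrite (le_trans (ler_wpM2l cz0 (_ : y - z <= y))) ?gerBl // ler_pM.
rewrite /edge_bound; apply: le_trans (_ : (D + 2) * (M * c M) <= _).
  rewrite (_ : D + 2 = 1 + (D + 1)); last by ring.
  rewrite [leRHS]mulrDl mul1r; apply: lerD zcz _; rewrite (mulrC M) ler_wpM2l //.
  by rewrite addr_ge0.
rewrite ler_wpDl ?mulr_ge0 ?addr_ge0 ?c_ge0 ?(ltW delta0) //.
rewrite mulrCA [leRHS]mulrCA ler_wpM2l // (le_trans (ler_wpM2l (ltW D2) cM)) //.
by rewrite mulrA [_ * (delta / _)]mulrCA mulfV ?lt0r_neq0 ?mulr1.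
Unshelve. all: by end_near. Qed.

Lemma edge_bound_of_light_load {D delta B eta M z y : R} :
  0 <= D -> 0 < delta -> 0 <= B -> 0 <= eta -> 0 <= M ->
  eta * B * (D + 2) <= delta -> 0 <= z <= eta * M -> 0 <= y ->
  c z <= B * M `^ D -> (eta * M <= y -> (D + 1) * (B * M `^ D) <= delta * c y) ->
  edge_bound c D delta M z y.
Proof.
move=> D0 delta0 B0 eta0 M0 etaB /andP[z0 zeta] y0 czB cy_large.
have [cz0 cy0] : 0 <= c z /\ 0 <= c y by split; apply: c_ge0.
have D1 : 0 <= D + 1 by rewrite addr_ge0.
set T := eta * M * (B * M `^ D).
have T0 : 0 <= T by rewrite /T !mulr_ge0 ?powR_ge0.
have zcz : z * c z <= T by rewrite ler_pM.
have yterm : (D + 1) * (c z * y) <= delta * (y * c y) + (D + 1) * T.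
  have [etay|yeta] := leP (eta * M) y.
    have := le_trans (ler_wpM2l D1 czB) (cy_large etay).
    have := mulr_ge0 D1 T0; nra.
  have : c z * y <= T by rewrite /T mulrC ler_pM // ltW.
  have := mulr_ge0 (mulr_ge0 y0 cy0) (ltW delta0); nra.
have U0 : 0 <= M * M `^ D := mulr_ge0 M0 (powR_ge0 M D).
have TU : T + (D + 1) * T <= delta * (M * M `^ D).
  have -> : T + (D + 1) * T = eta * B * (D + 2) * (M * M `^ D) by rewrite /T; ring.
  by rewrite ler_wpM2r.
have := mulr_ge0 D1 (mulr_ge0 cz0 z0); have := mulr_ge0 y0 cy0.
by rewrite /edge_bound; lra.
Qed.

Lemma edge_bound_gt {D delta K : R} : 0 <= D -> D < q -> 0 < delta -> 0 <= K ->
  \forall M \near +oo, forall z y, 0 <= z <= M -> 0 <= y <= M ->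
    (0 < z -> c z <= K * M `^ D) -> edge_bound c D delta M z y.
Proof.
move=> D0 Dq delta0 K0; set B := K + c 0.
have B0 : 0 <= B by rewrite addr_ge0 ?c_ge0.
have D2 : 0 < D + 2 by rewrite ltr_wpDl.
set eta := delta / ((D + 2) * (B + 1)).
have eta0 : 0 < eta by rewrite divr_gt0 // mulr_gt0 // ltr_wpDl.
have etaB : eta * B * (D + 2) <= delta.
  have -> : delta = eta * (B + 1) * (D + 2).
    by rewrite /eta; field; rewrite !lt0r_neq0 // ltr_wpDl.
  by have := mulr_ge0 (ltW eta0) (ltW D2); lra.
set t := (D + 1) * B / delta.
have t0 : 0 <= t by rewrite /t divr_ge0 ?(ltW delta0) // mulr_ge0 // addr_ge0.
near=> M => z y /andP[z0 zM] /andP[y0 yM] czK.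
have M0 : 0 <= M := le_trans z0 zM.
have etaM0 : 0 <= eta * M := mulr_ge0 (ltW eta0) M0.
have S1 : 1 <= M `^ D by apply: powR_ge1 => //; near: M; apply: nbhs_pinfty_ge.
have large : (t + (K + 1)) * M `^ D <= c (eta * M) by near: M; exact: cost_large.
have czB : c z <= B * M `^ D.
  have [zpos|] := ltP 0 z.
    by rewrite (le_trans (czK zpos)) // ler_wpM2r ?powR_ge0 // lerDl c_ge0.
  move=> z_le0; have -> : z = 0 by apply: le_anti; rewrite z_le0.
  have := c_ge0 _ (lexx 0); rewrite /B; nra.
(* A used edge costs at most [K * M^D] while [c (eta * M)] is already larger,
   so the equilibrium load is o(M). *)
have zeta : z <= eta * M.
  have [zpos|z_le0] := ltP 0 z; last exact: le_trans z_le0 etaM0.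
  rewrite leNgt; apply/negP => etaz.
  have := le_trans large (le_trans (c_mono _ _ etaM0 (ltW etaz)) (czK zpos)).
  by have := mulr_ge0 t0 (le_trans ler01 S1); lra.
apply: (edge_bound_of_light_load D0 delta0 B0 (ltW eta0) M0 etaB) => //.
  by rewrite z0 zeta.
move=> etay; have := le_trans large (c_mono _ _ etaM0 etay).
move=> /(ler_wpM2l (ltW delta0)); apply: le_trans.
have -> : (D + 1) * (B * M `^ D) = delta * (t * M `^ D).
  by rewrite /t; field; rewrite lt0r_neq0.
by rewrite ler_pM2l // ler_wpM2r ?powR_ge0 // lerDl addr_ge0.
Unshelve. all: by end_near. Qed.

Lemma cost_linearization_error {eps : R} : 0 < eps ->
  \forall M \near +oo, forall z y, 0 <= z <= M -> 0 <= y <= M ->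
    (c z - a * z `^ q) * ((q + 1) * y - q * z) <= eps * (M * M `^ q).
Proof.
move=> eps0; have q1 : 0 < q + 1 by rewrite ltr_wpDl.
set d := eps / (q + 1); have d0 : 0 < d by rewrite divr_gt0.
have [Y Y0 HY] := pinfty_threshold (cost_close d0).
set C := c Y + a * Y `^ q.
near=> M => z y /andP[z0 zM] /andP[y0 yM].
have M0 : 0 <= M := le_trans z0 zM.
have U0 : 0 <= eps * (M * M `^ q) by rewrite !mulr_ge0 ?powR_ge0 ?ltW.
(* Below the threshold [Y] the error is O(M), which is o(M^(q+1)) only when
   q > 0; when q = 0 it is nonpositive because c never exceeds its limit. *)
have [q0|q_neq0] := eqVneq q 0.
  apply: le_trans U0; have := cost_le_limit q0 z0.
  rewrite q0 powRr0 mulr1 mul0r subr0 add0r mul1r => cza.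
  by rewrite mulr_le0_ge0 // subr_le0.
have qpos : 0 < q by rewrite lt0r q_neq0.
have w : `|(q + 1) * y - q * z| <= (q + 1) * M.
  by rewrite ler_norml; apply/andP; split; nra.
apply: le_trans (ler_norm _) _; rewrite normrM.
have [Yz|zY] := leP Y z.
  apply: le_trans (ler_pM (normr_ge0 _) (normr_ge0 _) (HY z Yz) w) _.
  have -> : eps * (M * M `^ q) = d * M `^ q * ((q + 1) * M).
    by rewrite /d; field; rewrite lt0r_neq0.
  have : z `^ q <= M `^ q by apply: ge0_ler_powR; rewrite ?nnegrE.
  by have := mulr_ge0 (mulr_ge0 (ltW d0) (ltW q1)) M0; nra.
have czC : `|c z - a * z `^ q| <= C.
  apply: le_trans (ler_normB _ _) _.
  rewrite !ger0_norm ?c_ge0 ?mulr_ge0 ?powR_ge0 ?(ltW a_gt0) //.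
  apply: lerD; first exact: c_mono _ _ z0 (ltW zY).
  by rewrite ler_pM2l // ge0_ler_powR ?nnegrE ?(ltW Y0) ?(ltW zY).
have hC : C * (q + 1) <= eps * M `^ q.
  move: qpos; near: M; apply: filter_imply => qpos.
  apply: filterS _ (powR_dominated (C * (q + 1) / eps) qpos) => M.
  by rewrite powRr0 mulr1 ler_pdivrMr // [leRHS]mulrC.
have := normr_ge0 (c z - a * z `^ q); have := normr_ge0 ((q + 1) * y - q * z).
nra.
Unshelve. all: by end_near. Qed.

Lemma cost_deficit_small {eps : R} : 0 < eps ->
  \forall M \near +oo, forall y, 0 <= y <= M ->
    y * (a * y `^ q) <= y * c y + eps * (M * M `^ q).
Proof.
move=> eps0; have [Y Y0 HY] := pinfty_threshold (cost_close eps0).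
near=> M => y /andP[y0 yM].
have M1 : 1 <= M by near: M; apply: nbhs_pinfty_ge.
have U_ge : M <= M * M `^ q by rewrite ler_peMr ?powR_ge1 // (le_trans ler01).
have [Yy|yY] := leP Y y.
  have /andP[cy _] : a * y `^ q - eps * y `^ q <= c y <= a * y `^ q + eps * y `^ q.
    by rewrite -ler_distl; apply: HY.
  have yyU : y * y `^ q <= M * M `^ q.
    by rewrite ler_pM ?powR_ge0 // ge0_ler_powR ?nnegrE ?(le_trans y0 yM).
  have cy' : 0 <= c y - (a * y `^ q - eps * y `^ q) by rewrite subr_ge0.
  by have := mulr_ge0 y0 cy'; nra.
have hY : Y * (a * Y `^ q) <= eps * M.
  near: M; apply: filterS (nbhs_pinfty_ge (num_real (Y * (a * Y `^ q) / eps))).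
  by move=> M; rewrite ler_pdivrMr // [leRHS]mulrC.
have yY' : y * (a * y `^ q) <= Y * (a * Y `^ q).
  rewrite ler_pM ?mulr_ge0 ?powR_ge0 ?(ltW yY) ?(ltW a_gt0) // ler_pM2l //.
  by rewrite ge0_ler_powR ?nnegrE ?(ltW Y0) ?(ltW yY).
have MU : eps * M <= eps * (M * M `^ q) by rewrite ler_pM2l.
by have := mulr_ge0 y0 (c_ge0 _ y0); lra.
Unshelve. all: by end_near. Qed.

Lemma edge_bound_of_errors {delta M z y : R} : 0 <= delta -> 0 <= z -> 0 <= y ->
  (c z - a * z `^ q) * ((q + 1) * y - q * z) <= delta / 2 * (M * M `^ q) ->
  y * (a * y `^ q) <= y * c y + delta / 2 * (M * M `^ q) ->
  edge_bound c q delta M z y.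
Proof.
move=> delta0 z0 y0 err1 err2.
have young := powR_tangent q_ge0 z0 y0.
rewrite -(ler_pM2l a_gt0) in young.
rewrite /edge_bound.
have -> : z * c z + (q + 1) * (c z * (y - z)) =
    a * (z * z `^ q + (q + 1) * (z `^ q * (y - z))) +
    (c z - a * z `^ q) * ((q + 1) * y - q * z) by ring.
by have := mulr_ge0 delta0 (mulr_ge0 y0 (c_ge0 _ y0)); lra.
Qed.

Lemma edge_bound_eq {delta : R} : 0 < delta ->
  \forall M \near +oo, forall z y, 0 <= z <= M -> 0 <= y <= M ->
    edge_bound c q delta M z y.
Proof.
move=> delta0; have delta2 : 0 < delta / 2 by rewrite divr_gt0.
near=> M => z y zM yM.
apply: edge_bound_of_errors.
- exact: ltW.
- by case/andP: zM.
- by case/andP: yM.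
- by move: z y zM yM; near: M; exact: cost_linearization_error.
- by move: y yM; near: M; exact: cost_deficit_small.
Unshelve. all: by end_near. Qed.

Lemma edge_bound_eventually {D delta K : R} : 0 <= D -> 0 < delta -> 0 <= K ->
  \forall M \near +oo, forall z y, 0 <= z <= M -> 0 <= y <= M ->
    (0 < z -> c z <= K * M `^ D) -> edge_bound c D delta M z y.
Proof.
move=> D0 delta0 K0; have [qD|Dq|<-] := ltgtP q D.
- by apply: filterS (edge_bound_lt qD delta0) => M + z y zM yM _; apply.
- exact: edge_bound_gt.
- by apply: filterS (edge_bound_eq delta0) => M + z y zM yM _; apply.
Qed.

Lemma load_cost_lower {D n : R} : 0 <= D -> D <= q -> 0 < n ->
  exists2 kappa, 0 <= kappa &
    \forall M \near +oo, forall y, M / n <= y -> M * M `^ D <= kappa * (y * c y).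
Proof.
move=> D0 Dq n0; have [Y _ HY] := pinfty_threshold cost_ge_powR.
set w := a / 2 * n^-1 `^ D.
have w0 : 0 < w by rewrite mulr_gt0 ?divr_gt0 ?powR_gt0 ?invr_gt0.
exists (n / w); first by rewrite divr_ge0 ?ltW.
near=> M => y My.
have M0 : 0 <= M by near: M; apply: nbhs_pinfty_ge.
have Mn : Num.max 1 Y <= M / n.
  rewrite ler_pdivlMr //; near: M; apply: nbhs_pinfty_ge; apply: num_real.
move: Mn; rewrite ge_max => /andP[Mn1 MnY].
have Mn0 := le_trans ler01 Mn1.
have y1 := le_trans Mn1 My.
have cy : w * M `^ D <= c y.
  apply: le_trans (HY y (le_trans MnY My)); rewrite /w -mulrA ler_pM2l ?divr_gt0 //.
  rewrite mulrC -powRM ?invr_ge0 ?(ltW n0) //.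
  apply: le_trans (_ : y `^ D <= _); last exact: ler_powR.
  by apply: ge0_ler_powR; rewrite ?nnegrE ?(le_trans Mn0 My).
have -> : M * M `^ D = n / w * (M / n * (w * M `^ D)).
  by field; rewrite !lt0r_neq0.
rewrite ler_pM2l ?divr_gt0 //.
exact: ler_pM Mn0 (mulr_ge0 (ltW w0) (powR_ge0 _ _)) My cy.
Unshelve. all: by end_near. Qed.

End EdgeCost.

Lemma od_path_uniq {V E : finType} {tl hd : E -> V} {o d : V} {s : seq E} :
  is_od_path tl hd o d s -> uniq s.
Proof.
by case: s => // e s /and4P[_ _ _]; rewrite cons_uniq => /andP[_ /map_uniq].
Qed.

Lemma od_path_neq_nil {V E : finType} {tl hd : E -> V} {o d : V} {s : seq E} :
  is_od_path tl hd o d s -> s != [::].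
Proof. by case: s. Qed.

Section Flows.
Context {R : realType} {V E P : finType} {tl hd : E -> V} {o d : V}.
Context {pth : P -> seq E} {c : E -> R -> R}.
Hypotheses (pth_od : forall p, is_od_path tl hd o d (pth p))
  (c_ge0 : forall e x, 0 <= x -> 0 <= c e x)
  (c_mono : forall e x y, 0 <= x -> x <= y -> c e x <= c e y).

Lemma sum_load_mulr (g : E -> R) (f : P -> R) :
  \sum_e load pth f e * g e = \sum_p f p * \sum_(e <- pth p) g e.
Proof.
rewrite /load; under eq_bigr => e _ do rewrite big_distrl /= big_mkcond /=.
rewrite exchange_big /=; apply: eq_bigr => p _.
rewrite big_distrr /= [RHS]big_uniq ?(od_path_uniq (pth_od p)) //= [RHS]big_mkcond.
by apply: eq_bigr => e _; case: ifP.
Qed.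

Context {M : R}.
Implicit Types (f : P -> R) (p : P) (e : E).

Lemma load_ge0 {f} e : feasible M f -> 0 <= load pth f e.
Proof. by case=> f0 _; apply: sumr_ge0 => p _. Qed.

Lemma load_le_demand {f} e : feasible M f -> load pth f e <= M.
Proof.
case=> f0 <-; rewrite [leRHS](bigID (fun p => e \in pth p)) /=.
by rewrite lerDl sumr_ge0.
Qed.

Lemma load_within_demand {f} e : feasible M f -> 0 <= load pth f e <= M.
Proof. by move=> Hf; rewrite load_ge0 ?load_le_demand. Qed.

Lemma flow_le_load {f p e} : feasible M f -> e \in pth p -> f p <= load pth f e.
Proof. by case=> f0 _ ep; rewrite /load (bigD1 p) //= lerDl sumr_ge0. Qed.

Lemma exists_heavy_path (p0 : P) {f} : feasible M f -> exists p, M / #|P|%:R <= f p.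
Proof.
case=> f0 <-; case: (arg_maxP f (isT : xpredT p0)) => pm _ pm_max; exists pm.
rewrite ler_pdivrMr ?ltr0n; last by apply/card_gt0P; exists p0.
by rewrite mulr_natr -sumr_const; apply: ler_sum.
Qed.

Lemma social_cost_ge_term {f} e : feasible M f ->
  load pth f e * c e (load pth f e) <= social_cost pth c f.
Proof.
move=> Hf; rewrite /social_cost; apply: ler_sum_term => e'.
by rewrite mulr_ge0 ?c_ge0 ?(load_ge0 e' Hf).
Qed.

Lemma path_cost_le_demand {f} p : feasible M f ->
  path_cost pth c f p <= \sum_(e <- pth p) c e M.
Proof.
move=> Hf; apply: ler_sum => e _.
by rewrite c_mono ?(load_ge0 e Hf) ?(load_le_demand e Hf).
Qed.

Lemma wardrop_edge_cost_le {feq e} p : wardrop_eq pth c M feq ->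
  0 < load pth feq e -> c e (load pth feq e) <= path_cost pth c feq p.
Proof.
move=> [Hf Hwar] ze; have [p' ep' fp'] : exists2 p', e \in pth p' & 0 < feq p'.
  apply: contrapT => no_path; move: ze; rewrite /load big1 ?ltxx // => p' ep'.
  apply: le_anti; rewrite (proj1 Hf p') andbT leNgt; apply/negP => fp'.
  by apply: no_path; exists p'.
apply: le_trans (Hwar p' p fp'); rewrite /path_cost (big_rem e) //= lerDl.
by apply: sumr_ge0 => e' _; rewrite c_ge0 ?(load_ge0 e' Hf).
Qed.

Lemma wardrop_variational_inequality (p0 : P) {feq f} :
  wardrop_eq pth c M feq -> feasible M f ->
  social_cost pth c feq <= \sum_e load pth f e * c e (load pth feq e).
Proof.
move=> [[feq0 sum_feq] Hwar] [f0 sum_f].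
case: (arg_minP (path_cost pth c feq) (isT : xpredT p0)) => pm _ pm_min.
have cost_eq p : 0 < feq p -> path_cost pth c feq p = path_cost pth c feq pm.
  by move=> fp; apply: le_anti; rewrite Hwar ?pm_min.
rewrite /social_cost !sum_load_mulr.
have -> : \sum_p feq p * path_cost pth c feq p = \sum_p feq p * path_cost pth c feq pm.
  apply: eq_bigr => p _; have [fp|fp_le0] := ltP 0 (feq p); first by rewrite cost_eq.
  by rewrite (@le_anti _ _ (feq p) 0) ?fp_le0 ?feq0 // !mul0r.
rewrite -big_distrl /= sum_feq -sum_f big_distrl /=.
by apply: ler_sum => p _; rewrite ler_wpM2l //; apply: pm_min.
Qed.

Lemma social_cost_le_edge_bound (p0 : P) {D delta kappa feq f} :
  0 <= D -> 0 <= delta -> wardrop_eq pth c M feq -> feasible M f ->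
  M * M `^ D <= kappa * social_cost pth c f ->
  (forall e, edge_bound (c e) D delta M (load pth feq e) (load pth f e)) ->
  social_cost pth c feq <= (1 + delta * (1 + #|E|%:R * kappa)) * social_cost pth c f.
Proof.
move=> D0 delta0 Heq Hf lower bound.
have vi := wardrop_variational_inequality p0 Heq Hf.
rewrite /edge_bound in bound.
have := ler_sum (index_enum E) (fun e (_ : true) => bound e).
rewrite !big_split /= -!big_distrr /= sumr_const -/(social_cost pth c feq).
rewrite -/(social_cost pth c f) -mulr_natr -/#|E|.
have -> : \sum_e c e (load pth feq e) * (load pth f e - load pth feq e) =
    \sum_e load pth f e * c e (load pth feq e) - social_cost pth c feq.
  by rewrite /social_cost -sumrB; apply: eq_bigr => e _; ring.
have : 0 <= (D + 1) *
    (\sum_e load pth f e * c e (load pth feq e) - social_cost pth c feq).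
  by rewrite mulr_ge0 ?subr_ge0 // addr_ge0.
have : delta * #|E|%:R * (M * M `^ D) <= delta * #|E|%:R * (kappa * social_cost pth c f).
  by rewrite ler_wpM2l ?mulr_ge0.
lra.
Qed.

End Flows.

Section Asymptotics.
Context {R : realType} {V E P : finType} {tl hd : E -> V} {o d : V}.
Context {pth : P -> seq E} {c : E -> R -> R} {q a : E -> R} {D : R} {pD : P}.
Hypotheses (c_ge0 : forall e x, 0 <= x -> 0 <= c e x)
  (c_mono : forall e x y, 0 <= x -> x <= y -> c e x <= c e y)
  (q_ge0 : forall e, 0 <= q e) (a_gt0 : forall e, 0 < a e)
  (c_lim : forall e, (c e x / x `^ q e) @[x --> +oo] --> a e)
  (D_ge0 : 0 <= D) (pD_deg : forall e, e \in pth pD -> q e <= D)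
  (deg_ge : forall p, exists2 e, e \in pth p & D <= q e).

Lemma social_cost_lower (p0 : P) : exists2 kappa, 0 <= kappa &
  \forall M \near +oo, forall f, feasible M f ->
    M * M `^ D <= kappa * social_cost pth c f.
Proof.
set n : R := #|P|%:R; have n0 : 0 < n by rewrite ltr0n; apply/card_gt0P; exists p0.
have /choice[k hk] : forall e, exists k, 0 <= k /\ \forall M \near +oo,
    D <= q e -> forall y, M / n <= y -> M * M `^ D <= k * (y * c e y).
  move=> e; have [Dq|qD] := leP D (q e).
    have [k k0 hk] := load_cost_lower (a_gt0 e) (c_lim e) D_ge0 Dq n0.
    by exists k; split => //; apply: filterS hk => M + _.
  by exists 0; split => //; apply: nearW.
exists (\sum_e k e); first by apply: sumr_ge0 => e _; case: (hk e).
near=> M => f Hf.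
have hM : forall e, D <= q e -> forall y, M / n <= y -> M * M `^ D <= k e * (y * c e y).
  by near: M; apply: filter_forall => e; exact: (hk e).2.
have [p fp] := exists_heavy_path p0 Hf.
have [e ep De] := deg_ge p.
apply: le_trans (hM e De _ (le_trans fp (flow_le_load Hf ep))) _.
apply: ler_pM; rewrite ?mulr_ge0 ?c_ge0 ?(load_ge0 e Hf) ?(hk e).1 //.
  by apply: ler_sum_term => e'; case: (hk e').
exact (social_cost_ge_term c_ge0 e Hf).
Unshelve. all: by end_near. Qed.

Lemma equilibrium_cost_upper : exists2 K, 0 <= K &
  \forall M \near +oo, forall feq, wardrop_eq pth c M feq ->
    forall e, 0 < load pth feq e -> c e (load pth feq e) <= K * M `^ D.
Proof.
exists (\sum_(e <- pth pD) (a e + 1)).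
  by apply: sumr_ge0 => e _; rewrite addr_ge0 ?ltW.
near=> M => feq Heq e ze.
have hM : forall e', e' \in pth pD -> c e' M <= (a e' + 1) * M `^ D.
  near: M; apply: filter_forall => e'; apply: filter_imply => /pD_deg.
  exact (cost_le_powR (a_gt0 e') (c_lim e')).
apply: le_trans (wardrop_edge_cost_le c_ge0 pD Heq ze) _.
apply: le_trans (path_cost_le_demand c_mono pD Heq.1) _.
by rewrite big_distrl /= !big_seq; apply: ler_sum => e' /hM.
Unshelve. all: by end_near. Qed.

Lemma edge_bounds_eventually {delta : R} : 0 < delta ->
  \forall M \near +oo, forall feq f, wardrop_eq pth c M feq -> feasible M f ->
    forall e, edge_bound (c e) D delta M (load pth feq e) (load pth f e).
Proof.
move=> delta0; have [K K0 upper] := equilibrium_cost_upper.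
near=> M => feq f Heq Hf e.
have edge : forall e z y, 0 <= z <= M -> 0 <= y <= M ->
    (0 < z -> c e z <= K * M `^ D) -> edge_bound (c e) D delta M z y.
  near: M; apply: filter_forall => e'.
  exact (edge_bound_eventually (c_ge0 e') (c_mono e') (q_ge0 e') (a_gt0 e') (c_lim e')
    D_ge0 delta0 K0).
apply: edge; rewrite ?(load_within_demand e Hf) ?(load_within_demand e Heq.1) //.
by move: feq Heq e; near: M; exact: upper.
Unshelve. all: by end_near. Qed.

End Asymptotics.

Theorem corollary4p8 (R : realType) (V E P : finType)
  (tl hd : E -> V) (o d : V) (pth : P -> seq E) (c : E -> R -> R)
  (Hpaths : forall p, is_od_path tl hd o d (pth p))
  (Hinj : injective pth)
  (p0 : P)
  (Hc_ge0 : forall e x, 0 <= x -> 0 <= c e x)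
  (Hc_mono : forall e x y, 0 <= x -> x <= y -> c e x <= c e y)
  (Hc_cont : forall e, {within `[0, +oo[, continuous (c e)})
  (Hgrowth : forall e, exists q : R, 0 <= q /\
     exists l : R, l != 0 /\ (c e x / x `^ q) @[x --> +oo] --> l) :
  forall eps : R, 0 < eps -> exists M0 : R, forall M : R, 0 < M -> M0 <= M ->
    (exists f, feasible M f /\ social_cost pth c f = 0) \/
    (forall feq f, wardrop_eq pth c M feq -> feasible M f ->
       social_cost pth c feq <= (1 + eps) * social_cost pth c f).
Proof.
move=> eps eps0; have [q q_lim] := choice Hgrowth.
have [a a_lim] := choice (fun e => (q_lim e).2).
have q_ge0 e : 0 <= q e := (q_lim e).1.
have c_lim e : (c e x / x `^ q e) @[x --> +oo] --> a e := (a_lim e).2.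
have a_gt0 e : 0 < a e by rewrite lt0r (a_lim e).1 (cost_limit_ge0 (Hc_ge0 e) (c_lim e)).
have [D [pD [D_ge0 pD_deg deg_ge]]] :=
  exists_bottleneck p0 (fun p => od_path_neq_nil (Hpaths p)) q_ge0.
have [kappa kappa0 lower] := social_cost_lower Hc_ge0 a_gt0 c_lim D_ge0 deg_ge p0.
pose delta := eps / (1 + #|E|%:R * kappa).
have n_kappa : 0 < 1 + #|E|%:R * kappa by rewrite ltr_wpDr ?mulr_ge0.
have delta0 : 0 < delta by rewrite divr_gt0.
have [M1 _ lowM] := pinfty_threshold lower.
have [M2 _ edgeM] := pinfty_threshold
  (edge_bounds_eventually Hc_ge0 Hc_mono q_ge0 a_gt0 c_lim D_ge0 pD_deg delta0).
exists (Num.max M1 M2) => M _; rewrite ge_max => /andP[/lowM low /edgeM edge].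
right => feq f Heq Hf.
have := social_cost_le_edge_bound Hpaths p0 D_ge0 (ltW delta0) Heq Hf (low f Hf)
  (edge feq f Heq Hf).
by rewrite /delta divfK ?lt0r_neq0.
Qed.
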